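(* Let $f$ be a smooth function on an open planar set whose graph is an indefinite improper affine sphere with affine normal $(0,0,1)$ (equivalently $\det D^2f=-1$) and strictly positive Pick invariant. Let $p(u,v)$ be a planar parameterization by asymptotic parameters, i.e. $D^2f(p_u,p_u)=D^2f(p_v,p_v)=0$, oriented so that $D^2f(p_u,p_v)=[p_u,p_v]$. Then: (1) $D^2f\,p_u=R\,p_u$ and $D^2f\,p_v=-R\,p_v$; (2) setting $\pi_1(p)=p+R\nabla f(p)$ and $\pi_2(p)=p-R\nabla f(p)$, the map $\pi_1\circ p$ is constant along each asymptotic line $v=v_0$ and $\pi_2\circ p$ is constant along each asymptotic line $u=u_0$.
   Context: $[X,Y]$ denotes the determinant of the $2\times 2$ matrix with columns $X,Y$; $R$ is the counterclockwise rotation by ninety degrees; $D^2f$ is the Hessian of $f$, used both as a bilinear form and as a matrix. Asymptotic parameters of the graph surface $q(u,v)=(p(u,v),f(p(u,v)))$ are parameters with $[q_u,q_v,q_{uu}]=[q_u,q_v,q_{vv}]=0$, which amounts to $D^2f(p_u,p_u)=D^2f(p_v,p_v)=0$. *)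

From Stdlib Require Import Reals List.
From Coquelicot Require Import Coquelicot.
Open Scope R_scope.

(* Coordinates of the plane are indexed by bool: false = first, true = second. *)

Definition partial (i : bool) (g : R -> R -> R) : R -> R -> R :=
  fun x y => if i then Derive (fun t => g x t) y else Derive (fun t => g t y) x.

Fixpoint iter_partial (l : list bool) (g : R -> R -> R) : R -> R -> R :=
  match l with
  | nil => g
  | i :: l' => partial i (iter_partial l' g)
  end.

Definition open2 (U : R -> R -> Prop) : Prop :=
  open (fun z : R * R => U (fst z) (snd z)).

Definition smooth_on (U : R -> R -> Prop) (g : R -> R -> R) : Prop :=
  forall (l : list bool) (x y : R), U x y ->
    ex_derive (fun t => iter_partial l g t y) x /\
    ex_derive (fun t => iter_partial l g x t) y /\
    continuous (fun z : R * R => iter_partial l g (fst z) (snd z)) (x, y).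

Definition hess (f : R -> R -> R) (i j : bool) : R -> R -> R :=
  partial i (partial j f).

Definition hess_det (f : R -> R -> R) (x y : R) : R :=
  hess f false false x y * hess f true true x y
  - hess f false true x y * hess f true false x y.

Definition hess_app (f : R -> R -> R) (x y : R) (a : R * R) : R * R :=
  (hess f false false x y * fst a + hess f false true x y * snd a,
   hess f true false x y * fst a + hess f true true x y * snd a).

Definition hess_bil (f : R -> R -> R) (x y : R) (a b : R * R) : R :=
  fst a * fst (hess_app f x y b) + snd a * snd (hess_app f x y b).

Definition bracket (a b : R * R) : R := fst a * snd b - snd a * fst b.

Definition rot (a : R * R) : R * R := (- snd a, fst a).

Definition vopp (a : R * R) : R * R := (- fst a, - snd a).
Definition vadd (a b : R * R) : R * R := (fst a + fst b, snd a + snd b).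
Definition vsub (a b : R * R) : R * R := (fst a - fst b, snd a - snd b).

Definition grad (f : R -> R -> R) (z : R * R) : R * R :=
  (partial false f (fst z) (snd z), partial true f (fst z) (snd z)).

Definition pi1 (f : R -> R -> R) (z : R * R) : R * R := vadd z (rot (grad f z)).
Definition pi2 (f : R -> R -> R) (z : R * R) : R * R := vsub z (rot (grad f z)).

(* Pick invariant of the graph of f when det D^2 f = -1 (so the Blaschke metric
   is h = D^2 f and the cubic form is C = (1/2) D^3 f):
   J = 1/(n(n-1)) h^{ij} h^{kl} h^{mn} C_{ikm} C_{jln}, n = 2. *)
Definition sumb (g : bool -> R) : R := g false + g true.

Definition hinv (f : R -> R -> R) (x y : R) (i j : bool) : R :=
  (match i, j with
   | false, false => hess f true true x y
   | true, true => hess f false false x y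
   | false, true => - hess f false true x y
   | true, false => - hess f true false x y
   end) / hess_det f x y.

Definition cubic (f : R -> R -> R) (x y : R) (i j k : bool) : R :=
  / 2 * iter_partial (i :: j :: k :: nil) f x y.

Definition pick (f : R -> R -> R) (x y : R) : R :=
  / 2 * sumb (fun i => sumb (fun j => sumb (fun k => sumb (fun l =>
    sumb (fun m => sumb (fun n =>
      hinv f x y i j * hinv f x y k l * hinv f x y m n
      * cubic f x y i k m * cubic f x y j l n)))))).

Definition p_u (p1 p2 : R -> R -> R) (u v : R) : R * R :=
  (partial false p1 u v, partial false p2 u v).
Definition p_v (p1 p2 : R -> R -> R) (u v : R) : R * R :=
  (partial true p1 u v, partial true p2 u v).

(* In the asymptotic frame (p_u, p_v) the Hessian H = D^2 f has Gram matrix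
   [[0, [p_u,p_v]], [c, 0]] with c = D^2f(p_v,p_u); det H = -1 forces
   c = [p_u,p_v], so H is symmetric and H p_u, H p_v are pinned down by their
   pairings with p_u and p_v, which gives H p_u = R p_u and H p_v = -R p_v.
   The Jacobian of grad f is H, so the derivative of p +- R grad f(p) along the
   corresponding asymptotic line is p_u + R H p_u = p_u + R R p_u = 0
   (resp. p_v - R H p_v = 0). *)
From Stdlib Require Import Reals List Lra Psatz.
From Coquelicot Require Import Coquelicot.
Open Scope R_scope.

Definition dot (a b : R * R) : R := fst a * fst b + snd a * snd b.

(* The Jacobian of grad f, i.e. the transpose of hess_app. *)
Definition dgrad (f : R -> R -> R) (x y : R) (a : R * R) : R * R :=
  (hess f false false x y * fst a + hess f true false x y * snd a,
   hess f false true x y * fst a + hess f true true x y * snd a).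

Lemma hess_bil_dot f x y a b : hess_bil f x y a b = dot a (hess_app f x y b).
Proof. reflexivity. Qed.

Lemma eq_of_dot_frame (a b w w' : R * R) :
  bracket a b <> 0 -> dot a w = dot a w' -> dot b w = dot b w' -> w = w'.
Proof.
  destruct a as [a1 a2], b as [b1 b2], w as [w1 w2], w' as [w1' w2'].
  unfold bracket, dot; simpl; intros Hab Ha Hb.
  assert (Da : a1 * (w1 - w1') + a2 * (w2 - w2') = 0) by lra.
  assert (Db : b1 * (w1 - w1') + b2 * (w2 - w2') = 0) by lra.
  assert (E1 : (a1 * b2 - a2 * b1) * (w1 - w1')
               = b2 * (a1 * (w1 - w1') + a2 * (w2 - w2'))
                 - a2 * (b1 * (w1 - w1') + b2 * (w2 - w2'))) by ring.
  assert (E2 : (a1 * b2 - a2 * b1) * (w2 - w2')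
               = a1 * (b1 * (w1 - w1') + b2 * (w2 - w2'))
                 - b1 * (a1 * (w1 - w1') + a2 * (w2 - w2'))) by ring.
  rewrite Da, Db, !Rmult_0_r, Rminus_0_r in E1, E2.
  apply Rmult_integral in E1, E2.
  f_equal; lra.
Qed.

Section NullFrame.

Variables (f : R -> R -> R) (x y : R) (a b : R * R).
Hypothesis det_neg1 : hess_det f x y = -1.
Hypothesis null_a : hess_bil f x y a a = 0.
Hypothesis null_b : hess_bil f x y b b = 0.
Hypothesis oriented : hess_bil f x y a b = bracket a b.
Hypothesis frame : bracket a b <> 0.

(* Cauchy-Binet: the Gram determinant of H in the frame (a, b) is det H [a,b]^2. *)
Lemma hess_bil_null_frame_swap : hess_bil f x y b a = bracket a b.
Proof.
  assert (Gram : hess_bil f x y a a * hess_bil f x y b b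
                 - hess_bil f x y a b * hess_bil f x y b a
                 = hess_det f x y * bracket a b ^ 2).
  { unfold hess_bil, hess_app, hess_det, bracket; cbn [fst snd]; ring. }
  rewrite null_a, null_b, oriented, det_neg1 in Gram.
  assert (E : bracket a b * (hess_bil f x y b a - bracket a b) = 0) by nra.
  apply Rmult_integral in E; destruct E; [contradiction | lra].
Qed.

Lemma hess_sym_null_frame : hess f false true x y = hess f true false x y.
Proof.
  assert (Skew : hess_bil f x y a b - hess_bil f x y b a
                 = (hess f false true x y - hess f true false x y) * bracket a b).
  { unfold hess_bil, hess_app, bracket; cbn [fst snd]; ring. }
  rewrite oriented, hess_bil_null_frame_swap in Skew.
  assert (E : (hess f false true x y - hess f true false x y) * bracket a b = 0) by lra.
  apply Rmult_integral in E; destruct E; [lra | contradiction].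
Qed.

Lemma hess_app_null_frame :
  hess_app f x y a = rot a /\ hess_app f x y b = vopp (rot b).
Proof.
  pose proof hess_bil_null_frame_swap as Hba.
  rewrite !hess_bil_dot in null_a, null_b, oriented, Hba.
  split; apply (eq_of_dot_frame a b); trivial;
    destruct a, b; unfold dot, rot, vopp, bracket in *; simpl in *; lra.
Qed.

Lemma dgrad_null_frame : dgrad f x y a = rot a /\ dgrad f x y b = vopp (rot b).
Proof.
  assert (dgradE : forall c, dgrad f x y c = hess_app f x y c).
  { intros c; unfold dgrad, hess_app; rewrite hess_sym_null_frame; reflexivity. }
  rewrite !dgradE; exact hess_app_null_frame.
Qed.

End NullFrame.

Lemma ex_diff_n_smooth_on U g : smooth_on U g ->
  forall n l x y, U x y -> ex_diff_n (iter_partial l g) n x y.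
Proof.
  intros Hs n; induction n as [|n IH]; intros l x y Hxy;
    destruct (Hs l x y Hxy) as (Hx & Hy & Hc); simpl.
  - split; [apply continuity_2d_pt_filterlim; exact Hc | exact I].
  - repeat split; [apply continuity_2d_pt_filterlim; exact Hc | exact Hx | exact Hy
                  | exact (IH (false :: l) x y Hxy) | exact (IH (true :: l) x y Hxy)].
Qed.

Lemma differentiable_DL_regular_1 (g : R -> R -> R) x y : DL_regular_n g 1 x y ->
  differentiable_pt_lim g x y (partial false g x y) (partial true g x y).
Proof.
  intros [D HD] eps.
  set (r := eps / (Rabs D + 1)).
  assert (HD1 : 0 < Rabs D + 1) by (generalize (Rabs_pos D); lra).
  assert (Hr : 0 < r) by (apply Rdiv_lt_0_compat; [apply cond_pos | exact HD1]).
  assert (Hnear : locally_2d (fun u v => Rmax (Rabs (u - x)) (Rabs (v - y)) <= r) x y).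
  { exists (mkposreal r Hr); simpl; intros u v Hu Hv; apply Rmax_lub; lra. }
  generalize (locally_2d_and _ _ _ _ HD Hnear).
  apply locally_2d_impl, locally_2d_forall; intros u v [Htaylor Hclose].
  assert (Hpol : DL_pol 1 g x y (u - x) (v - y)
                 = g x y + (partial false g x y * (u - x) + partial true g x y * (v - y))).
  { unfold DL_pol, differential, partial_derive, Binomial.C; simpl; unfold partial; field. }
  rewrite Hpol in Htaylor.
  set (M := Rmax (Rabs (u - x)) (Rabs (v - y))) in *.
  assert (HM : 0 <= M) by (apply Rle_trans with (Rabs (u - x)); [apply Rabs_pos | apply Rmax_l]).
  assert (HMr : M * (Rabs D + 1) <= eps).
  { unfold r in Hclose; apply Rle_div_r in Hclose; lra. }
  replace (g u v - g x y - (partial false g x y * (u - x) + partial true g x y * (v - y)))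
    with (g u v - (g x y + (partial false g x y * (u - x) + partial true g x y * (v - y))))
    by ring.
  apply Rle_trans with (1 := Htaylor).
  generalize (Rle_abs D); simpl; nra.
Qed.

Lemma differentiable_smooth_on U g l x y : open2 U -> smooth_on U g -> U x y ->
  differentiable_pt_lim (iter_partial l g) x y
    (iter_partial (false :: l) g x y) (iter_partial (true :: l) g x y).
Proof.
  intros Ho Hs Hxy.
  apply differentiable_DL_regular_1, Taylor_Lagrange_2d, locally_2d_locally.
  generalize (Ho (x, y) Hxy); apply filter_imp.
  intros [u v] Huv; exact (ex_diff_n_smooth_on U g Hs 2 l u v Huv).
Qed.

Lemma is_derive_comp_2d (g : R -> R -> R) (a b : R -> R) t lx ly da db :
  differentiable_pt_lim g (a t) (b t) lx ly -> is_derive a t da -> is_derive b t db ->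
  is_derive (fun s => g (a s) (b s)) t (lx * da + ly * db).
Proof.
  intros Hg Ha Hb; apply is_derive_Reals.
  apply derivable_pt_lim_comp_2d; [exact Hg | apply is_derive_Reals; assumption ..].
Qed.

Lemma is_derive_grad_curve Omega f (a b : R -> R) t da db :
  open2 Omega -> smooth_on Omega f -> Omega (a t) (b t) ->
  is_derive a t da -> is_derive b t db ->
  is_derive (fun s => partial false f (a s) (b s)) t (fst (dgrad f (a t) (b t) (da, db))) /\
  is_derive (fun s => partial true f (a s) (b s)) t (snd (dgrad f (a t) (b t) (da, db))).
Proof.
  intros Ho Hf Hab Ha Hb.
  split; apply is_derive_comp_2d; trivial;
    exact (differentiable_smooth_on Omega f (_ :: nil) _ _ Ho Hf Hab).
Qed.

Lemma eq_is_derive_0_segment (F : R -> R) t1 t2 :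
  (forall t, Rmin t1 t2 <= t <= Rmax t1 t2 -> is_derive F t 0) -> F t1 = F t2.
Proof.
  intros HF.
  destruct (MVT_gen F t1 t2 (fun _ => 0)) as [c [_ Hc]]; [| | lra].
  - intros t Ht; apply HF; lra.
  - intros t Ht; apply derivable_continuous_pt; exists 0.
    apply is_derive_Reals, HF, Ht.
Qed.

Section PiAlongCurve.

Variables (Omega : R -> R -> Prop) (f : R -> R -> R).
Hypothesis Omega_open : open2 Omega.
Hypothesis f_smooth : smooth_on Omega f.
Variables (a b da db : R -> R) (t1 t2 : R).

Let on_segment (P : R -> Prop) := forall t, Rmin t1 t2 <= t <= Rmax t1 t2 -> P t.

Hypothesis curve_in_Omega : on_segment (fun t => Omega (a t) (b t)).
Hypothesis is_derive_a : on_segment (fun t => is_derive a t (da t)).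
Hypothesis is_derive_b : on_segment (fun t => is_derive b t (db t)).

Lemma pi1_const_curve :
  on_segment (fun t => dgrad f (a t) (b t) (da t, db t) = rot (da t, db t)) ->
  pi1 f (a t1, b t1) = pi1 f (a t2, b t2).
Proof.
  intros Hrot.
  apply injective_projections;
    [ apply (eq_is_derive_0_segment (fun t => fst (pi1 f (a t, b t))))
    | apply (eq_is_derive_0_segment (fun t => snd (pi1 f (a t, b t)))) ];
    intros t Ht;
    destruct (is_derive_grad_curve Omega f a b t (da t) (db t) Omega_open f_smooth
                (curve_in_Omega t Ht) (is_derive_a t Ht) (is_derive_b t Ht)) as [Dx Dy].
  - replace 0 with (da t + - snd (dgrad f (a t) (b t) (da t, db t)))
      by (rewrite (Hrot t Ht); simpl; ring).
    apply (is_derive_plus a (fun s => - partial true f (a s) (b s)));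
      [exact (is_derive_a t Ht) | exact (is_derive_opp _ _ _ Dy)].
  - replace 0 with (db t + fst (dgrad f (a t) (b t) (da t, db t)))
      by (rewrite (Hrot t Ht); simpl; ring).
    apply (is_derive_plus b (fun s => partial false f (a s) (b s)));
      [exact (is_derive_b t Ht) | exact Dx].
Qed.

Lemma pi2_const_curve :
  on_segment (fun t => dgrad f (a t) (b t) (da t, db t) = vopp (rot (da t, db t))) ->
  pi2 f (a t1, b t1) = pi2 f (a t2, b t2).
Proof.
  intros Hrot.
  apply injective_projections;
    [ apply (eq_is_derive_0_segment (fun t => fst (pi2 f (a t, b t))))
    | apply (eq_is_derive_0_segment (fun t => snd (pi2 f (a t, b t)))) ];
    intros t Ht;
    destruct (is_derive_grad_curve Omega f a b t (da t) (db t) Omega_open f_smooth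
                (curve_in_Omega t Ht) (is_derive_a t Ht) (is_derive_b t Ht)) as [Dx Dy].
  - replace 0 with (da t - - snd (dgrad f (a t) (b t) (da t, db t)))
      by (rewrite (Hrot t Ht); simpl; ring).
    apply (is_derive_minus a (fun s => - partial true f (a s) (b s)));
      [exact (is_derive_a t Ht) | exact (is_derive_opp _ _ _ Dy)].
  - replace 0 with (db t - fst (dgrad f (a t) (b t) (da t, db t)))
      by (rewrite (Hrot t Ht); simpl; ring).
    apply (is_derive_minus b (fun s => partial false f (a s) (b s)));
      [exact (is_derive_b t Ht) | exact Dx].
Qed.

End PiAlongCurve.

Lemma is_derive_partial_smooth_on W q u v : smooth_on W q -> W u v ->
  is_derive (fun t => q t v) u (partial false q u v) /\
  is_derive (fun t => q u t) v (partial true q u v).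
Proof.
  intros Hq Huv; destruct (Hq nil u v Huv) as (Hu & Hv & _).
  split; apply Derive_correct; assumption.
Qed.

(* The positivity of the Pick invariant only guarantees that asymptotic
   parameters exist. *)
Theorem mainTheorem4
  (Omega : R -> R -> Prop) (f : R -> R -> R)
  (W : R -> R -> Prop) (p1 p2 : R -> R -> R) :
  open2 Omega -> smooth_on Omega f ->
  (forall x y, Omega x y -> hess_det f x y = -1) ->
  (forall x y, Omega x y -> pick f x y > 0) ->
  open2 W -> smooth_on W p1 -> smooth_on W p2 ->
  (forall u v, W u v -> Omega (p1 u v) (p2 u v)) ->
  (forall u v, W u v -> bracket (p_u p1 p2 u v) (p_v p1 p2 u v) <> 0) ->
  (forall u v, W u v ->
     hess_bil f (p1 u v) (p2 u v) (p_u p1 p2 u v) (p_u p1 p2 u v) = 0 /\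
     hess_bil f (p1 u v) (p2 u v) (p_v p1 p2 u v) (p_v p1 p2 u v) = 0) ->
  (forall u v, W u v ->
     hess_bil f (p1 u v) (p2 u v) (p_u p1 p2 u v) (p_v p1 p2 u v)
     = bracket (p_u p1 p2 u v) (p_v p1 p2 u v)) ->
  (forall u v, W u v ->
     hess_app f (p1 u v) (p2 u v) (p_u p1 p2 u v) = rot (p_u p1 p2 u v) /\
     hess_app f (p1 u v) (p2 u v) (p_v p1 p2 u v) = vopp (rot (p_v p1 p2 u v)))
  /\
  (forall u1 u2 v0,
     (forall u, Rmin u1 u2 <= u <= Rmax u1 u2 -> W u v0) ->
     pi1 f (p1 u1 v0, p2 u1 v0) = pi1 f (p1 u2 v0, p2 u2 v0))
  /\
  (forall u0 v1 v2,
     (forall v, Rmin v1 v2 <= v <= Rmax v1 v2 -> W u0 v) ->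
     pi2 f (p1 u0 v1, p2 u0 v1) = pi2 f (p1 u0 v2, p2 u0 v2)).
Proof.
  intros Ho Hf Hdet _ _ Hp1 Hp2 Hmap Hbr Has Hor.
  assert (Hframe : forall u v, W u v ->
    let x := p1 u v in let y := p2 u v in
    let a := p_u p1 p2 u v in let b := p_v p1 p2 u v in
    (hess_app f x y a = rot a /\ hess_app f x y b = vopp (rot b)) /\
    (dgrad f x y a = rot a /\ dgrad f x y b = vopp (rot b))).
  { intros u v Huv; destruct (Has u v Huv) as [Ha Hb].
    split; [apply hess_app_null_frame | apply dgrad_null_frame];
      auto using Hdet, Hor, Hbr. }
  split; [| split].
  - intros u v Huv; exact (proj1 (Hframe u v Huv)).
  - intros u1 u2 v0 Hseg.
    apply (pi1_const_curve Omega f Ho Hf (fun u => p1 u v0) (fun u => p2 u v0)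
             (fun u => partial false p1 u v0)
             (fun u => partial false p2 u v0));
      intros u Hu; specialize (Hseg u Hu); auto.
    + apply (is_derive_partial_smooth_on W p1 u v0 Hp1 Hseg).
    + apply (is_derive_partial_smooth_on W p2 u v0 Hp2 Hseg).
    + exact (proj1 (proj2 (Hframe u v0 Hseg))).
  - intros u0 v1 v2 Hseg.
    apply (pi2_const_curve Omega f Ho Hf (fun v => p1 u0 v) (fun v => p2 u0 v)
             (fun v => partial true p1 u0 v)
             (fun v => partial true p2 u0 v));
      intros v Hv; specialize (Hseg v Hv); auto.
    + apply (is_derive_partial_smooth_on W p1 u0 v Hp1 Hseg).
    + apply (is_derive_partial_smooth_on W p2 u0 v Hp2 Hseg).
    + exact (proj2 (proj2 (Hframe u0 v Hseg))).
Qed.
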